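(* Let $n\ge 1$ and let $\vec s=(s_1,\dots,s_n)$, $\vec t=(t_1,\dots,t_n)$ be positive integers with $t_i<s_i$ for all $i$. Let $\mathcal{B}_{\vec s,\vec t}(n)$ be the number of distinct sets of balls that can be on the lawn after $n$ turns of the $(\vec s,\vec t)$-tennis ball process. Then $\mathcal{B}_{\vec s,\vec t}(n)=|\mathrm{SVT}((n+1)^2,\rho)|$, where $\rho$ is the density on the shape $(n+1,n+1)$ with first row densities $(\rho_{1,1},\rho_{1,2},\dots,\rho_{1,n+1})=(1,t_1,t_2,\dots,t_n)$ and second row densities $(\rho_{2,1},\dots,\rho_{2,n},\rho_{2,n+1})=(s_1-t_1,s_2-t_2,\dots,s_n-t_n,1)$.
   Context: The $(\vec s,\vec t)$-tennis ball process: balls are numbered $1,2,\dots,s_1+\dots+s_n$. There is a pool, initially empty. At turn $i$ ($1\le i\le n$), the balls numbered $s_1+\dots+s_{i-1}+1,\dots,s_1+\dots+s_i$ are added to the pool, and then any $t_i$ balls of the pool are removed and thrown onto the lawn. $\mathcal{B}_{\vec s,\vec t}(n)$ counts the possible sets of balls on the lawn after $n$ turns. A density on a shape $\lambda$ is an assignment of a nonnegative integer $\rho_{i,j}$ to every cell $(i,j)$ (row $i$, column $j$); let $N=\sum\rho_{i,j}$. A standard set-valued Young tableau of shape $\lambda$ and density $\rho$ assigns to each cell $(i,j)$ a set $S_{i,j}$ with $|S_{i,j}|=\rho_{i,j}$, the sets partitioning $[N]$, such that every element of $S_{i,j}$ is smaller than every element of $S_{i,j+1}$ and of $S_{i+1,j}$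 whenever those cells exist. $\mathrm{SVT}(\lambda,\rho)$ is the set of these tableaux. *)

From mathcomp Require Import all_boot.
Set Implicit Arguments. Unset Strict Implicit. Unset Printing Implicit Defensive.

(* ---------- Tennis ball process ----------
   Balls are numbered 1..N with N = sumn s; ball number b is represented by
   the ordinal (b-1) : 'I_N.  Turns i = 1..n; s_i = nth 0 s (i-1),
   t_i = nth 0 t (i-1). *)

(* balls numbered <= m, i.e. ordinals of value < m *)
Definition balls_upto (N m : nat) : {set 'I_N} := [set b : 'I_N | val b < m].

(* one turn: after adding balls up to number k, the pool is
   balls_upto k minus the lawn L; throw any tt balls of the pool on the lawn *)
Definition lawn_step (N k tt : nat) (L : {set 'I_N}) : {set {set 'I_N}} :=
  [set L :|: R | R in [set R : {set 'I_N} |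
                        (R \subset balls_upto N k :\: L) && (#|R| == tt)]].

Fixpoint lawns (N : nat) (s t : seq nat) (i : nat) : {set {set 'I_N}} :=
  match i with
  | 0 => [set set0]
  | i'.+1 => \bigcup_(L in lawns N s t i') lawn_step (sumn (take i'.+1 s)) (nth 0 t i') L
  end.

Definition tennis_B (s t : seq nat) (n : nat) : nat := #|lawns (sumn s) s t n|.

(* ---------- Standard set-valued Young tableaux ----------
   Shape lam : seq nat (row lengths), cells (i,j) 0-based with j < nth 0 lam i.  Labels 1..N represented by 'I_N. *)

Definition shape_width (lam : seq nat) : nat := foldr maxn 0 lam.

Definition in_shape (lam : seq nat) (i j : nat) : bool := j < nth 0 lam i.

Definition svt_N (lam : seq nat) (rho : nat -> nat -> nat) : nat :=
  \sum_(c : 'I_(size lam) * 'I_(shape_width lam) | in_shape lam c.1 c.2) rho c.1 c.2.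

Definition cell (lam : seq nat) : finType :=
  (('I_(size lam) * 'I_(shape_width lam))%type : finType).

Definition next_cell (c c' : nat * nat) : bool :=
  ((c'.1 == c.1) && (c'.2 == c.2.+1)) || ((c'.1 == c.1.+1) && (c'.2 == c.2)).

Definition is_svt (lam : seq nat) (rho : nat -> nat -> nat) (N : nat)
  (T : {ffun cell lam -> {set 'I_N}}) : bool :=
  [&& [forall c : cell lam, ~~ in_shape lam c.1 c.2 ==> (T c == set0)],
      [forall c : cell lam, in_shape lam c.1 c.2 ==> (#|T c| == rho c.1 c.2)],
      [forall c : cell lam, forall c' : cell lam, (c != c') ==> [disjoint T c & T c']],
      (\bigcup_(c : cell lam) T c == [set: 'I_N]) &
      [forall c : cell lam, forall c' : cell lam,
         [&& in_shape lam c.1 c.2, in_shape lam c'.1 c'.2 &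
             next_cell (val c.1, val c.2) (val c'.1, val c'.2)] ==>
         [forall x in T c, forall y in T c', val x < val y]]].

Definition SVT_card (lam : seq nat) (rho : nat -> nat -> nat) : nat :=
  #|[set T : {ffun cell lam -> {set 'I_(svt_N lam rho)}} | @is_svt lam rho (svt_N lam rho) T]|.

Definition tennis_rho (s t : seq nat) (n : nat) (i j : nat) : nat :=
  if i == 0 then (if j == 0 then 1 else nth 0 t j.-1)
  else if j == n then 1 else nth 0 s j - nth 0 t j.

(* After i turns the lawn is a set L of balls numbered at most S_i = s_1 + ... + s_i with
   |L| = T_i = t_1 + ... + t_i, and the only other constraint is the ballot condition
   |L ∩ [1, S_j]| >= T_j for j <= i: conversely, from such an L one recovers a valid history
   by throwing, at each turn, the smallest balls of L not yet thrown.
   A two-row set-valued tableau with positive densities is determined by the set R of labels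
   in its top row, each row being filled cell by cell in increasing order; R arises in this way
   exactly when, for every column j, at least ρ_{1,1} + ... + ρ_{1,j+1} of the first
   ρ_{1,1} + ... + ρ_{1,j+1} + ρ_{2,1} + ... + ρ_{2,j} labels lie in R.  For the density of the
   theorem these two bounds are T_j + 1 and S_j + 1, so R always contains the smallest label and
   never the largest one, and removing them turns the tableau condition into the lawn one. *)

From mathcomp Require Import all_boot zify.
Set Implicit Arguments. Unset Strict Implicit. Unset Printing Implicit Defensive.

(** * Ranks in a set of labels *)

Definition rank_in m (A : {set 'I_m}) (x : 'I_m) : nat := #|[set y in A | y < x]|.

Lemma rank_in_le m (A : {set 'I_m}) (x y : 'I_m) : x <= y -> rank_in A x <= rank_in A y.
Proof.
move=> le_xy; apply: subset_leq_card; apply/subsetP => z; rewrite !inE.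
by case/andP => -> /= lt_zx; apply: leq_trans lt_zx le_xy.
Qed.

Lemma rank_in_lt m (A : {set 'I_m}) (x y : 'I_m) :
  x \in A -> x < y -> rank_in A x < rank_in A y.
Proof.
move=> xA lt_xy; apply: proper_card; apply/properP; split.
  apply/subsetP => z; rewrite !inE; case/andP => -> /= lt_zx; apply: ltn_trans lt_zx lt_xy.
by exists x; rewrite !inE ?ltnn ?andbF ?xA.
Qed.

Lemma rank_in_lt_card m (A : {set 'I_m}) x : x \in A -> rank_in A x < #|A|.
Proof.
move=> xA; apply: proper_card; apply/properP; split.
  by apply/subsetP => z; rewrite !inE; case/andP.
by exists x; rewrite ?inE ?ltnn ?andbF.
Qed.

Lemma rank_in_inj m (A : {set 'I_m}) : {in A &, injective (rank_in A)}.
Proof.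
move=> x y xA yA e; apply/val_inj/eqP; case: (ltngtP x y) => // lt.
  by have := rank_in_lt xA lt; rewrite e ltnn.
by have := rank_in_lt yA lt; rewrite e ltnn.
Qed.

Lemma card_set_count (T : finType) (A : {set T}) (Q : pred T) :
  #|[set x in A | Q x]| = count Q (enum A).
Proof.
rewrite cardE /enum_mem size_filter count_filter; apply: eq_count => x.
by rewrite /= !inE andbC.
Qed.

(* [rank_in A] maps [A] bijectively onto [0, #|A|). *)
Lemma card_rank_in_pred m (A : {set 'I_m}) (P : pred nat) :
  #|[set x in A | P (rank_in A x)]| = count P (iota 0 #|A|).
Proof.
rewrite (card_set_count A (fun x => P (rank_in A x))) -count_map.
have uniq_ranks : uniq (map (rank_in A) (enum A)).
  by rewrite map_inj_in_uniq ?enum_uniq // => x y; rewrite !mem_enum; exact: rank_in_inj.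
apply/permP; apply: uniq_perm => //; first exact: iota_uniq.
have sub_ranks : {subset map (rank_in A) (enum A) <= iota 0 #|A|}.
  move=> k /mapP [x]; rewrite mem_enum => xA ->; rewrite mem_iota /=.
  exact: rank_in_lt_card.
have size_ranks : size (iota 0 #|A|) <= size (map (rank_in A) (enum A)).
  by rewrite size_map size_iota cardE.
exact: (uniq_min_size uniq_ranks sub_ranks size_ranks).2.
Qed.

Lemma count_iota_range lo hi c :
  count (fun k => (lo <= k) && (k < hi)) (iota 0 c) = minn hi c - lo.
Proof.
elim: c => [|c IH]; first by rewrite minn0.
rewrite -addn1 iotaD count_cat IH /= add0n addn0.
case: (leqP lo c) => ? ; case: (ltnP c hi) => ? /=; lia.
Qed.

Lemma card_rank_in_range m (A : {set 'I_m}) lo hi :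
  #|[set x in A | (lo <= rank_in A x) && (rank_in A x < hi)]| = minn hi #|A| - lo.
Proof.
by rewrite (card_rank_in_pred A (fun k => (lo <= k) && (k < hi))) count_iota_range.
Qed.

Lemma card_rank_in_lt m (A : {set 'I_m}) hi :
  #|[set x in A | rank_in A x < hi]| = minn hi #|A|.
Proof.
rewrite -[RHS]subn0 -(card_rank_in_range A 0 hi).
by apply: eq_card => x; rewrite !inE.
Qed.

Lemma card_balls_upto N a : #|balls_upto N a| = minn a N.
Proof.
have -> : balls_upto N a = [set x in [set: 'I_N] | val x < a].
  by apply/setP => x; rewrite !inE.
rewrite card_set_count enum_setT -enumT -(count_map val (fun k => (0 <= k) && (k < a))).
by rewrite val_enum_ord count_iota_range subn0.
Qed.

Lemma balls_upto_sub N a b : a <= b -> balls_upto N a \subset balls_upto N b.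
Proof.
by move=> le_ab; apply/subsetP => x; rewrite !inE => lt_xa; apply: leq_trans lt_xa le_ab.
Qed.

Lemma rank_in_lt_balls N (A : {set 'I_N}) a k x :
  k <= #|A :&: balls_upto N a| -> x \in A -> rank_in A x < k -> x < a.
Proof.
move=> le_k xA lt_rank; rewrite ltnNge; apply/negP => le_ax.
have : #|A :&: balls_upto N a| <= rank_in A x.
  apply: subset_leq_card; apply/subsetP => z; rewrite !inE.
  by case/andP => -> /= lt_za; apply: leq_trans lt_za le_ax.
lia.
Qed.

Lemma rank_in_lt_cardI N (A : {set 'I_N}) a x :
  x \in A -> x < a -> rank_in A x < #|A :&: balls_upto N a|.
Proof.
move=> xA lt_xa; apply: proper_card; apply/properP; split.
  by apply/subsetP => z; rewrite !inE => /andP [-> lt_zx]; apply: ltn_trans lt_zx lt_xa.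
by exists x; rewrite !inE ?ltnn ?andbF ?xA.
Qed.

Lemma sumn_takeS (u : seq nat) j : sumn (take j.+1 u) = sumn (take j u) + nth 0 u j.
Proof. by elim: u j => [|x u IH] [|j] //=; rewrite ?take0 ?addn0 // IH addnA. Qed.

Lemma sumn_take_mono (u : seq nat) i j : i <= j -> sumn (take i u) <= sumn (take j u).
Proof.
move=> /subnK <-; elim: (j - i) => [|d IH] //; rewrite addSn sumn_takeS.
exact: leq_trans IH (leq_addr _ _).
Qed.

Lemma sumn_take_big (u : seq nat) j : sumn (take j u) = \sum_(0 <= k < j) nth 0 u k.
Proof. by elim: j => [|j IH]; [rewrite take0 big_geq | rewrite sumn_takeS IH big_nat_recr]. Qed.

(** * Lawns as ballot sets *)

Definition ballot_sets K W (lo hi : nat -> nat) (c : nat) : {set {set 'I_K}} :=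
  [set L : {set 'I_K} |
     (#|L| == c) && [forall j : 'I_W, lo j <= #|L :&: balls_upto K (hi j)|]].

Lemma eq_ballot_sets K W (lo lo' hi hi' : nat -> nat) c :
  (forall j, j < W -> lo j = lo' j) -> (forall j, j < W -> hi j = hi' j) ->
  ballot_sets K W lo hi c = ballot_sets K W lo' hi' c.
Proof.
move=> elo ehi; apply/setP => L; rewrite !inE; congr (_ && _).
by apply: eq_forallb => j; rewrite elo ?ehi.
Qed.

Definition ballot_lawns K (s t : seq nat) i : {set {set 'I_K}} :=
  [set L in ballot_sets K i.+1 (fun j => sumn (take j t)) (fun j => sumn (take j s))
                         (sumn (take i t))
     | L \subset balls_upto K (sumn (take i s))].

Lemma lawn_step_ballot K s t i (L R : {set 'I_K}) :
  L \in ballot_lawns K s t i -> R \subset balls_upto K (sumn (take i.+1 s)) :\: L ->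
  #|R| = nth 0 t i -> L :|: R \in ballot_lawns K s t i.+1.
Proof.
rewrite !inE => /andP [/andP [/eqP cardL /forallP ballotL] subL] subR cardR.
have disjLR : L :&: R = set0.
  apply/setP => x; rewrite !inE; apply/negP => /andP [xL xR].
  by move/subsetP: subR => /(_ x xR); rewrite !inE xL.
have subL' : L \subset balls_upto K (sumn (take i.+1 s)).
  exact: subset_trans subL (balls_upto_sub _ (sumn_take_mono _ (leqnSn _))).
have subLR : L :|: R \subset balls_upto K (sumn (take i.+1 s)).
  by rewrite subUset subL' (subset_trans subR (subsetDl _ _)).
have cardLR : #|L :|: R| = sumn (take i.+1 t).
  by rewrite cardsU disjLR cards0 subn0 cardL cardR sumn_takeS.
rewrite cardLR eqxx subLR andbT /=; apply/forallP => j.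
case: (ltnP j i.+1) => [lt_ji | le_ij].
  apply: leq_trans (ballotL (Ordinal lt_ji)) _.
  by apply: subset_leq_card; apply: setSI; apply: subsetUl.
have -> : nat_of_ord j = i.+1 by have := ltn_ord j; lia.
by rewrite (setIidPl subLR) cardLR.
Qed.

(* The balls of [L] thrown before turn [i + 1] can be taken to be its [t_1 + ... + t_i]
   smallest ones. *)
Lemma ballot_lawn_step K s t i (L : {set 'I_K}) :
  L \in ballot_lawns K s t i.+1 ->
  exists2 L', L' \in ballot_lawns K s t i &
              L \in lawn_step (sumn (take i.+1 s)) (nth 0 t i) L'.
Proof.
rewrite !inE => /andP [/andP [/eqP cardL /forallP ballotL] subL].
set L' := [set x in L | rank_in L x < sumn (take i t)].
have subL'L : L' \subset L by apply/subsetP => x; rewrite inE => /andP [].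
have cardL' : #|L'| = sumn (take i t).
  by rewrite card_rank_in_lt cardL; apply/minn_idPl/sumn_take_mono.
have L'_early j : j <= i ->
    [set x in L | rank_in L x < sumn (take j t)]
      \subset L' :&: balls_upto K (sumn (take j s)).
  move=> le_ji; apply/subsetP => x; rewrite !inE => /andP [xL lt_rank].
  rewrite xL /=; apply/andP; split; first exact: leq_trans lt_rank (sumn_take_mono _ le_ji).
  have lt_j : j < i.+2 by lia.
  exact: (rank_in_lt_balls (ballotL (Ordinal lt_j)) xL lt_rank).
exists L'.
  rewrite !inE cardL' eqxx /=; apply/andP; split.
    apply/forallP => j; have le_ji : j <= i by have := ltn_ord j; lia.
    apply: leq_trans (subset_leq_card (L'_early j le_ji)).
    rewrite card_rank_in_lt cardL (minn_idPl _) //.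
    exact: sumn_take_mono (leq_trans le_ji (leqnSn i)).
  by apply/subsetP => x /(subsetP (L'_early i (leqnn i))); rewrite inE => /andP [].
apply/imsetP; exists (L :\: L'); last by rewrite -{1}(setID L L') (setIidPr subL'L).
rewrite inE setSD //= cardsD (setIidPr subL'L) cardL' cardL sumn_takeS.
by rewrite addKn.
Qed.

Lemma lawns_ballot K s t i : lawns K s t i = ballot_lawns K s t i.
Proof.
elim: i => [|i IH] /=.
  apply/setP => L; rewrite !inE take0 /= cards_eq0.
  case: eqP => [-> | _] //=; rewrite sub0set andbT.
  by symmetry; apply/forallP => j; rewrite (ord1 j) take0.
rewrite IH; apply/setP => L; apply/bigcupP/idP => [[L' L'B /imsetP [R]] | LB].
  by rewrite inE => /andP [subR /eqP cardR] ->; exact: lawn_step_ballot.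
by have [L' L'B stepL] := ballot_lawn_step LB; exists L'.
Qed.

Lemma lawns_ballot_sets (s t : seq nat) n : size s = n ->
  lawns (sumn s) s t n =
  ballot_sets (sumn s) n.+1 (fun j => sumn (take j t)) (fun j => sumn (take j s))
              (sumn (take n t)).
Proof.
move=> size_s; rewrite lawns_ballot; apply/setP => L; rewrite !inE -size_s take_size.
suff -> : L \subset balls_upto (sumn s) (sumn s) by rewrite andbT.
by apply/subsetP => x _; rewrite inE ltn_ord.
Qed.

(** * Adding a smallest and a largest label *)

Section ShiftLabels.
Variable K : nat.

Definition shift_label (x : 'I_K) : 'I_K.+2 := lift ord0 (widen_ord (leqnSn K) x).

Definition shift_set (L : {set 'I_K}) : {set 'I_K.+2} := ord0 |: (shift_label @: L).

Lemma shift_label_inj : injective shift_label.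
Proof. by move=> x y /(congr1 val) [] /val_inj. Qed.

Lemma ord0_notin_shift (L : {set 'I_K}) : (ord0 : 'I_K.+2) \notin shift_label @: L.
Proof. by apply/imsetP => -[x _ /(congr1 val)]. Qed.

Lemma shift_setI_balls L a :
  shift_set L :&: balls_upto K.+2 a.+1 = shift_set (L :&: balls_upto K a).
Proof.
apply/setP => y; rewrite in_setI !in_setU1; case: (y =P ord0) => [->|_] /=; first by rewrite inE.
apply/andP/imsetP => [[/imsetP [x xL ->]] | [x]].
  by rewrite inE ltnS => xa; exists x => //; rewrite !inE xL.
by rewrite !inE => /andP [xL xa] ->; rewrite imset_f.
Qed.

Lemma card_shift_set L : #|shift_set L| = #|L|.+1.
Proof. by rewrite cardsU1 ord0_notin_shift card_imset //; exact: shift_label_inj. Qed.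

Lemma shift_set_inj : injective shift_set.
Proof.
move=> L1 L2 e; apply/setP => x.
have := congr1 (fun S : {set 'I_K.+2} => shift_label x \in S) e.
by rewrite /= /shift_set !in_setU1 /= !mem_imset //; exact: shift_label_inj.
Qed.

Lemma shift_set_preimage (R : {set 'I_K.+2}) :
  ord0 \in R -> R \subset balls_upto K.+2 K.+1 ->
  R = shift_set [set x | shift_label x \in R].
Proof.
move=> R0 subR; apply/setP => y; rewrite /shift_set in_setU1.
case: (y =P ord0) => [->|ny0] //=; apply/idP/imsetP => [yR | [x]]; last by rewrite inE => xR ->.
have y_gt0 : 0 < y by rewrite lt0n; apply/eqP => y0; apply: ny0; apply/val_inj.
have lt_y : y.-1 < K by rewrite -ltnS prednK //; move: (subsetP subR y yR); rewrite inE.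
have ey : y = shift_label (Ordinal lt_y) by apply/val_inj; rewrite /= /bump leq0n add1n prednK.
by exists (Ordinal lt_y); rewrite // inE -ey.
Qed.

Variables (W : nat) (lo hi : nat -> nat) (c j0 j1 : nat).
Hypotheses (lt_j0W : j0 < W) (lt_j1W : j1 < W).
Hypotheses (hi_j0 : hi j0 = 0) (lo_j1 : lo j1 = c) (hi_j1 : hi j1 = K).

(* The constraint at [j0] forces the label [0] into [R]; the one at [j1], together with
   [#|R| = c + 1], keeps the label [K + 1] out of it. *)
Lemma card_ballot_sets_shift :
  #|ballot_sets K W lo hi c| =
  #|ballot_sets K.+2 W (fun j => (lo j).+1) (fun j => (hi j).+1) c.+1|.
Proof.
rewrite -(card_imset _ shift_set_inj); apply: eq_card => R; apply/imsetP/idP.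
  case=> L; rewrite !inE => /andP [/eqP cardL /forallP ballotL] ->.
  rewrite card_shift_set cardL eqxx /=; apply/forallP => j.
  by rewrite shift_setI_balls card_shift_set ltnS.
rewrite inE => /andP [/eqP cardR /forallP ballotR].
have R0 : ord0 \in R.
  have /card_gt0P [y] := leq_trans (ltn0Sn _) (ballotR (Ordinal lt_j0W)).
  rewrite /= hi_j0 !inE ltnS leqn0 => /andP [yR /eqP y0].
  by rewrite (_ : ord0 = y) //; apply/val_inj.
have subR : R \subset balls_upto K.+2 K.+1.
  have := ballotR (Ordinal lt_j1W); rewrite /= lo_j1 hi_j1 -cardR => le_R.
  have <- : R :&: balls_upto K.+2 K.+1 = R by apply/eqP; rewrite eqEcard subsetIl le_R.
  exact: subsetIr.
set L := [set x | shift_label x \in R].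
have eR : R = shift_set L := shift_set_preimage R0 subR.
exists L => //; move: cardR ballotR; rewrite eR card_shift_set => -[cardL] ballotR.
rewrite inE cardL eqxx /=; apply/forallP => j.
by have := ballotR j; rewrite shift_setI_balls card_shift_set.
Qed.

End ShiftLabels.

(** * Two-row set-valued tableaux *)

Definition row_prefix (rho : nat -> nat -> nat) (i j : nat) : nat := \sum_(0 <= k < j) rho i k.

Lemma row_prefixS rho i j : row_prefix rho i j.+1 = row_prefix rho i j + rho i j.
Proof. exact: big_nat_recr. Qed.

Lemma row_prefix_mono rho i a b : a <= b -> row_prefix rho i a <= row_prefix rho i b.
Proof.
move=> /subnK <-; elim: (b - a) => [|d IH] //; rewrite addSn row_prefixS.
exact: leq_trans IH (leq_addr _ _).
Qed.

Lemma row_prefix_block rho i w r : r < row_prefix rho i w ->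
  exists2 j, j < w & row_prefix rho i j <= r < row_prefix rho i j.+1.
Proof.
elim: w => [|w IH]; first by rewrite /row_prefix big_geq.
case: (ltnP r (row_prefix rho i w)) => [/IH [j lt_jw block_j] _ | le_r lt_r].
  by exists j => //; apply: ltn_trans lt_jw _.
by exists w; rewrite ?le_r.
Qed.

Lemma row_prefix_block_inj rho i j j' r :
  row_prefix rho i j <= r < row_prefix rho i j.+1 ->
  row_prefix rho i j' <= r < row_prefix rho i j'.+1 -> j = j'.
Proof.
move=> /andP [lo_j hi_j] /andP [lo_j' hi_j'].
by case: (ltngtP j j') => // [/(row_prefix_mono rho i) | /(row_prefix_mono rho i)]; lia.
Qed.

Arguments shape_width : simpl never.

Section TwoRowTableaux.
Variables (W : nat) (rho : nat -> nat -> nat).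
Hypothesis rho_gt0 : forall i j, i < 2 -> j < W -> 0 < rho i j.
Local Notation lam := [:: W; W].
Local Notation N := (svt_N lam rho).
Local Notation P := (row_prefix rho).

Lemma shape_width_two_rows : shape_width lam = W.
Proof. by rewrite /shape_width /= maxn0 maxnn. Qed.

Lemma cell_col_lt (c : cell lam) : c.2 < W.
Proof. by rewrite -[X in _ < X]shape_width_two_rows ltn_ord. Qed.

Lemma in_shape_cell (c : cell lam) : in_shape lam c.1 c.2.
Proof. by have := cell_col_lt c; rewrite /in_shape; case: c => [[[|[|i]] ?] j]. Qed.

Definition mk_cell i j (lt_i2 : i < 2) (lt_jW : j < W) : cell lam :=
  (Ordinal lt_i2, Ordinal (eq_ind_r (fun w => j < w) lt_jW shape_width_two_rows)).

Lemma cell_val_inj (c c' : cell lam) :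
  nat_of_ord c.1 = c'.1 -> nat_of_ord c.2 = c'.2 -> c = c'.
Proof. by case: c c' => [a b] [a' b'] /= /val_inj -> /val_inj ->. Qed.

Lemma sum_cells_row i (F : nat -> nat) : i < 2 ->
  \sum_(c : cell lam | nat_of_ord c.1 == i) F c.2 = \sum_(0 <= k < W) F k.
Proof.
move=> lt_i2; pose in_row (a : 'I_2) (_ : 'I_(shape_width lam)) := nat_of_ord a == i.
rewrite (eq_bigl (fun c : cell lam => xpredT c.1 && in_row c.1 c.2)) //.
rewrite -(pair_big_dep xpredT in_row (fun _ b => F (nat_of_ord b))) /=.
rewrite big_ord_recl big_ord1 /= /in_row.
have row_sum : \sum_(b : 'I_(shape_width lam)) F b = \sum_(0 <= k < W) F k.
  by rewrite -(big_mkord xpredT F) shape_width_two_rows.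
by case: i lt_i2 {in_row} => [|[|]] //= _; rewrite big_pred0_eq ?addn0 ?add0n.
Qed.

Lemma sum_row_prefix i j : j <= W ->
  \sum_(0 <= k < W) (if k < j then rho i k else 0) = P i j.
Proof.
move=> le_jW; rewrite (@big_cat_nat _ _ _ j 0 W _ _ (leq0n j) le_jW) /=.
have -> : \sum_(j <= k < W) (if k < j then rho i k else 0) = 0.
  by rewrite big_nat_cond big1 // => k /andP [/andP [le_jk _] _]; rewrite ltnNge le_jk.
by rewrite addn0; apply: eq_big_nat => k /andP [_ ->].
Qed.

Lemma svt_N_two_rows : N = P 0 W + P 1 W.
Proof.
rewrite /svt_N (eq_bigl xpredT) => [|c]; last by rewrite in_shape_cell.
rewrite (bigID (fun c : cell lam => nat_of_ord c.1 == 0)) /=.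
rewrite [X in _ + X](eq_bigl (fun c : cell lam => nat_of_ord c.1 == 1)) => [|c]; last first.
  by case: c => [[[|[|]] ?] ?].
rewrite /row_prefix -(@sum_cells_row 0 (rho 0)) // -(@sum_cells_row 1 (rho 1)) //.
by congr (_ + _); apply: eq_bigr => c /eqP ->.
Qed.

Local Notation svt T := (@is_svt lam rho N T).

Definition top_row_sets : {set {set 'I_N}} :=
  ballot_sets N W (fun j => P 0 j.+1) (fun j => P 0 j.+1 + P 1 j) (P 0 W).

Section TableauFacts.
Variable T : {ffun cell lam -> {set 'I_N}}.
Hypothesis svtT : svt T.

Lemma svt_card (c : cell lam) : #|T c| = rho c.1 c.2.
Proof. by case/and5P: svtT => _ /forallP /(_ c); rewrite in_shape_cell => /eqP. Qed.

Lemma svt_disjoint (c c' : cell lam) : c != c' -> [disjoint T c & T c'].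
Proof. by case/and5P: svtT => _ _ /forallP /(_ c) /forallP /(_ c') /implyP. Qed.

Lemma svt_cover x : exists c, x \in T c.
Proof.
case/and5P: svtT => _ _ _ /eqP cover _.
have /bigcupP [c _ xc] : x \in \bigcup_c T c by rewrite cover inE.
by exists c.
Qed.

Lemma svt_lt_next (c c' : cell lam) x y :
  next_cell (nat_of_ord c.1, nat_of_ord c.2) (nat_of_ord c'.1, nat_of_ord c'.2) ->
  x \in T c -> y \in T c' -> x < y.
Proof.
case/and5P: svtT => _ _ _ _ /forallP /(_ c) /forallP /(_ c') /implyP incr next xc yc.
move: incr; rewrite !in_shape_cell next => /(_ isT) /forallP /(_ x) /implyP /(_ xc).
by move=> /forallP /(_ y) /implyP /(_ yc).
Qed.

Lemma svt_cell_nonempty (c : cell lam) : exists z, z \in T c.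
Proof. by apply/card_gt0P; rewrite svt_card rho_gt0 ?ltn_ord ?cell_col_lt. Qed.

Lemma svt_cell_uniq (c c' : cell lam) x : x \in T c -> x \in T c' -> c = c'.
Proof.
move=> xc xc'; apply/eqP/negPn/negP => /svt_disjoint disj.
by rewrite (disjointFr disj xc) in xc'.
Qed.

Lemma svt_row_lt (c c' : cell lam) x y : nat_of_ord c.1 = c'.1 -> c.2 < c'.2 ->
  x \in T c -> y \in T c' -> x < y.
Proof.
case: c' => a' b'; case: c => a b /= e_row.
move: {2}(b' - b.+1) (erefl (b' - b.+1)) => d.
elim: d a b x e_row => [|d IH] a b x e_row e_d lt_bb' xc yc.
  by apply: (svt_lt_next _ xc yc); rewrite /next_cell /= e_row !eqxx /=; lia.
have lt_b1 : b.+1 < W by have := cell_col_lt (a', b'); rewrite /=; lia.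
pose c'' := mk_cell (ltn_ord a) lt_b1.
have [z zc] := svt_cell_nonempty c''.
have lt_xz : x < z by apply: (svt_lt_next _ xc zc); rewrite /next_cell /= !eqxx.
by apply: ltn_trans lt_xz (IH c''.1 c''.2 z _ _ _ zc yc) => /=; lia.
Qed.

Lemma svt_col_lt (c c' : cell lam) x y :
  nat_of_ord c.1 = 0 -> nat_of_ord c'.1 = 1 -> c.2 <= c'.2 -> x \in T c -> y \in T c' -> x < y.
Proof.
move=> top bot; rewrite leq_eqVlt => /orP [/eqP e_col | lt_col] xc yc.
  by apply: (svt_lt_next _ xc yc); rewrite /next_cell /= top bot e_col !eqxx orbT.
pose c'' := mk_cell (isT : 1 < 2) (cell_col_lt c).
have [z zc] := svt_cell_nonempty c''.
have lt_xz : x < z by apply: (svt_lt_next _ xc zc); rewrite /next_cell /= top !eqxx orbT.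
by apply: ltn_trans lt_xz (svt_row_lt _ _ zc yc).
Qed.

Definition row_labels i : {set 'I_N} :=
  [set x | [exists c : cell lam, (nat_of_ord c.1 == i) && (x \in T c)]].

Lemma mem_row_labels (c : cell lam) x i :
  x \in T c -> (x \in row_labels i) = (nat_of_ord c.1 == i).
Proof.
move=> xc; rewrite inE; apply/existsP/idP => [[c' /andP [/eqP <- xc']] | e_row].
  by rewrite (svt_cell_uniq xc xc').
by exists c; rewrite e_row xc.
Qed.

Lemma row_labels1 : row_labels 1 = ~: row_labels 0.
Proof.
apply/setP => x; have [c xc] := svt_cover x.
by rewrite in_setC !(mem_row_labels _ xc); case: c xc => [[[|[|]] ?] ?].
Qed.

Lemma card_row_labelsI i (S : {set 'I_N}) :
  #|row_labels i :&: S| = \sum_(c : cell lam | nat_of_ord c.1 == i) #|T c :&: S|.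
Proof.
have card_sum (A : {set 'I_N}) : #|A| = \sum_x (x \in A).
  by rewrite -sum1_card big_mkcond; apply: eq_bigr => x _; case: (x \in A).
rewrite card_sum (eq_bigr (fun c => \sum_x (x \in T c :&: S))) => [|c _]; last exact: card_sum.
rewrite (exchange_big_dep xpredT) //=; apply: eq_bigr => x _.
have [c xc] := svt_cover x.
have others c' : c' != c -> (x \in T c' :&: S) = false.
  by move=> ne; rewrite inE; apply/negP => /andP [/(svt_cell_uniq xc) e _]; rewrite e eqxx in ne.
rewrite inE (mem_row_labels _ xc); case: eqP => [e | ne] /=.
  rewrite (bigD1 c) /=; last by rewrite e eqxx.
  by rewrite big1 ?addn0 ?inE ?xc // => c' /andP [_ ne']; rewrite others.
rewrite big1 // => c' /andP [/eqP e_row _]; rewrite others //.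
by apply/eqP => e_c; apply: ne; rewrite -e_c.
Qed.

Lemma card_row_labels i : i < 2 -> #|row_labels i| = P i W.
Proof.
move=> lt_i2; rewrite -(setIT (row_labels i)) card_row_labelsI /row_prefix.
rewrite -(sum_cells_row (rho i) lt_i2).
by apply: eq_bigr => c /eqP e_row; rewrite setIT svt_card e_row.
Qed.

Lemma rank_row_labels (c : cell lam) x : x \in T c ->
  rank_in (row_labels c.1) x = P c.1 c.2 + #|[set y in T c | y < x]|.
Proof.
move=> xc; set q := #|[set y in T c | y < x]|.
pose F k := if k < c.2 then rho c.1 k else if k == c.2 then q else 0.
have cell_term (c' : cell lam) :
    nat_of_ord c'.1 = c.1 -> #|T c' :&: [set y : 'I_N | y < x]| = F c'.2.
  move=> e_row; rewrite /F; case: (ltngtP c'.2 c.2) => lt_col.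
  - rewrite (setIidPl _) ?svt_card ?e_row //.
    by apply/subsetP => y yc'; rewrite inE (svt_row_lt _ _ yc' xc).
  - apply/eqP; rewrite cards_eq0 -subset0; apply/subsetP => y; rewrite !inE => /andP [yc' lt_yx].
    by have := svt_row_lt (esym e_row) lt_col xc yc'; rewrite ltnNge ltnW.
  - by rewrite (cell_val_inj e_row lt_col); apply: eq_card => y; rewrite !inE.
have -> : rank_in (row_labels c.1) x = #|row_labels c.1 :&: [set y : 'I_N | y < x]|.
  by apply: eq_card => y; rewrite !inE.
rewrite card_row_labelsI (eq_bigr (fun c' : cell lam => F c'.2)); last first.
  by move=> c' /eqP; exact: cell_term.
have -> := @sum_cells_row c.1 F (ltn_ord c.1).
have le_cW : c.2 <= W by apply: ltnW; apply: cell_col_lt.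
rewrite (@big_cat_nat _ _ _ c.2 0 W _ _ (leq0n _) le_cW) (@big_ltn _ _ _ c.2 W _ (cell_col_lt c)).
have -> : \sum_(c.2.+1 <= k < W) F k = 0.
  rewrite big_nat_cond big1 // => k /andP [/andP [lt_ck _] _].
  by rewrite /F ltnNge ltnW //= gtn_eqF.
rewrite /= {2}/F ltnn eqxx addn0; congr (_ + _).
by apply: eq_big_nat => k /andP [_ lt_kc]; rewrite /F lt_kc.
Qed.

Lemma rank_row_labels_block (c : cell lam) x : x \in T c ->
  P c.1 c.2 <= rank_in (row_labels c.1) x < P c.1 c.2.+1.
Proof.
move=> xc; rewrite rank_row_labels // row_prefixS leq_addr ltn_add2l -svt_card.
apply: proper_card; apply/properP; split; first by apply/subsetP => y; rewrite inE => /andP [].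
by exists x; rewrite ?inE ?ltnn ?andbF.
Qed.

Lemma row_labelsI_ge i j (S : {set 'I_N}) : i < 2 -> j <= W ->
  (forall c : cell lam, nat_of_ord c.1 = i -> c.2 < j -> T c \subset S) ->
  P i j <= #|row_labels i :&: S|.
Proof.
move=> lt_i2 le_jW sub_left; rewrite card_row_labelsI -sum_row_prefix //.
rewrite -(sum_cells_row (fun k => if k < j then rho i k else 0) lt_i2).
apply: leq_sum => c /eqP e_row; case: ifP => // lt_cj.
by rewrite (setIidPl (sub_left c e_row lt_cj)) svt_card e_row.
Qed.

Lemma row_labelsI_le i j (S : {set 'I_N}) : i < 2 -> j <= W ->
  (forall c : cell lam, nat_of_ord c.1 = i -> j <= c.2 -> [disjoint T c & S]) ->
  #|row_labels i :&: S| <= P i j.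
Proof.
move=> lt_i2 le_jW disj_right; rewrite card_row_labelsI -sum_row_prefix //.
rewrite -(sum_cells_row (fun k => if k < j then rho i k else 0) lt_i2).
apply: leq_sum => c /eqP e_row; case: ltnP => [_ | le_jc].
  by rewrite -e_row -svt_card subset_leq_card ?subsetIl.
by rewrite leqn0 cards_eq0 setI_eq0 disj_right.
Qed.

Lemma svt_bottom_label_ge (c : cell lam) (y : 'I_N) j :
  nat_of_ord c.1 = 1 -> j <= c.2 -> y \in T c -> P 0 j.+1 + P 1 j <= y.
Proof.
move=> bot le_jc yc.
have le_jW : j < W := leq_ltn_trans le_jc (cell_col_lt c).
have card_below : #|balls_upto N y| = y by rewrite card_balls_upto; apply/minn_idPl/ltnW.
have top_below : P 0 j.+1 <= #|row_labels 0 :&: balls_upto N y|.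
  apply: row_labelsI_ge => // c0 top lt_c0j; apply/subsetP => z zc0; rewrite inE.
  exact: (svt_col_lt top bot (leq_trans _ le_jc) zc0 yc).
have bot_below : P 1 j <= #|row_labels 1 :&: balls_upto N y|.
  have -> : row_labels 1 :&: balls_upto N y = [set z in row_labels c.1 | z < y].
    by apply/setP => z; rewrite bot !inE.
  have /andP [le_rank _] := rank_row_labels_block yc.
  by apply: leq_trans (row_prefix_mono _ _ le_jc) _; rewrite -bot.
have := cardsID (row_labels 0) (balls_upto N y).
rewrite card_below setDE -row_labels1 !(setIC (balls_upto N y)) => <-.
exact: leq_add.
Qed.

Lemma row_labels0_ballot : row_labels 0 \in top_row_sets.
Proof.
rewrite inE card_row_labels //= eqxx /=; apply/forallP => j.
set m := P 0 j.+1 + P 1 j.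
have le_mN : m <= N.
  by rewrite svt_N_two_rows leq_add ?row_prefix_mono // ltnW.
have bot_below : #|row_labels 1 :&: balls_upto N m| <= P 1 j.
  apply: row_labelsI_le => [//||c bot le_jc]; first exact: ltnW.
  rewrite disjoint_subset; apply/subsetP => y yc; rewrite !inE -leqNgt.
  exact: svt_bottom_label_ge bot le_jc yc.
have := cardsID (row_labels 0) (balls_upto N m).
rewrite card_balls_upto (minn_idPl le_mN) setDE -row_labels1 !(setIC (balls_upto N m)).
by move=> card_m; rewrite -(leq_add2r (P 1 j)) -/m -{1}card_m leq_add2l.
Qed.

End TableauFacts.

Definition row_of_top (R : {set 'I_N}) (i : nat) : {set 'I_N} := if i == 0 then R else ~: R.

Definition tableau_of_top (R : {set 'I_N}) : {ffun cell lam -> {set 'I_N}} :=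
  [ffun c : cell lam => [set x in row_of_top R c.1 |
                P c.1 c.2 <= rank_in (row_of_top R c.1) x < P c.1 c.2.+1]].

Section TopRow.
Variable R : {set 'I_N}.
Hypothesis R_top : R \in top_row_sets.

Lemma card_row_of_top i : i < 2 -> #|row_of_top R i| = P i W.
Proof.
move: R_top; rewrite inE => /andP [/eqP card_R _].
case: i => [|[|]] // _; rewrite /row_of_top //=.
have := cardsC R; rewrite card_ord card_R => card_RC.
by apply/eqP; rewrite -(eqn_add2l (P 0 W)) card_RC svt_N_two_rows.
Qed.

Lemma tableau_of_top_cover x : exists2 c : cell lam,
  nat_of_ord c.1 = (if x \in R then 0 else 1) & x \in tableau_of_top R c.
Proof.
set i := if x \in R then 0 else 1.
have lt_i2 : i < 2 by rewrite /i; case: (x \in R).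
have x_row : x \in row_of_top R i.
  by rewrite /row_of_top /i; case xR: (x \in R); rewrite //= inE xR.
have := rank_in_lt_card x_row; rewrite card_row_of_top // => /row_prefix_block [j lt_jW block].
by exists (mk_cell lt_i2 lt_jW); rewrite // ffunE inE x_row.
Qed.

Lemma top_lt_bottom j x y : j < W -> x \in R -> rank_in R x < P 0 j.+1 ->
  y \notin R -> P 1 j <= rank_in (~: R) y -> x < y.
Proof.
move: R_top; rewrite inE => /andP [_ /forallP ballot_R] lt_jW xR rank_x yR rank_y.
have ballot_j := ballot_R (Ordinal lt_jW); rewrite /= in ballot_j.
have lt_xm := rank_in_lt_balls ballot_j xR rank_x.
apply: leq_trans lt_xm _; rewrite leqNgt; apply/negP => lt_ym.
have yCR : y \in ~: R by rewrite inE.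
have card_split := cardsID R (balls_upto N (P 0 j.+1 + P 1 j)).
rewrite card_balls_upto setDE !(setIC (balls_upto N _)) in card_split.
have := leq_add ballot_j (leq_ltn_trans rank_y (rank_in_lt_cardI yCR lt_ym)).
by rewrite addnS card_split ltnNge geq_minl.
Qed.

Lemma card_tableau_of_top (c : cell lam) : #|tableau_of_top R c| = rho c.1 c.2.
Proof.
rewrite ffunE card_rank_in_range card_row_of_top ?ltn_ord //.
by rewrite (minn_idPl (row_prefix_mono _ _ (cell_col_lt c))) row_prefixS addKn.
Qed.

Lemma tableau_of_top_disjoint (c c' : cell lam) : c != c' ->
  [disjoint tableau_of_top R c & tableau_of_top R c'].
Proof.
move=> ne_cc'; rewrite -setI_eq0; apply/eqP/setP => x; rewrite !ffunE !inE.
apply/negP => /andP [/andP [x_row block] /andP [x_row' block']].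
have [e_row | ne_row] := eqVneq (nat_of_ord c.1) c'.1.
  rewrite e_row in block; move: ne_cc'.
  by rewrite (cell_val_inj e_row (row_prefix_block_inj block block')) eqxx.
move: x_row x_row' ne_row; rewrite /row_of_top; clear ne_cc' block block'.
by case: c => [[[|[|]] ?] ?]; case: c' => [[[|[|]] ?] ?] //=; rewrite inE; case: (x \in R).
Qed.

Lemma tableau_of_top_increasing (c c' : cell lam) x y :
  next_cell (nat_of_ord c.1, nat_of_ord c.2) (nat_of_ord c'.1, nat_of_ord c'.2) ->
  x \in tableau_of_top R c -> y \in tableau_of_top R c' -> x < y.
Proof.
rewrite !ffunE !inE /next_cell /= => /orP [] /andP [/eqP e_row /eqP e_col].
  rewrite e_row e_col => /and3P [_ _ rank_x] /and3P [_ rank_y _].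
  rewrite ltnNge; apply/negP => /(rank_in_le (row_of_top R c.1)) le_yx.
  by have := leq_ltn_trans (leq_trans rank_y le_yx) rank_x; rewrite ltnn.
have top : nat_of_ord c.1 = 0 by have := ltn_ord c'.1; rewrite e_row /=; lia.
rewrite e_row e_col top /row_of_top /= => /and3P [xR _ rank_x] /and3P [yR rank_y _].
by apply: (top_lt_bottom (cell_col_lt c) xR rank_x); rewrite -?in_setC.
Qed.

Lemma tableau_of_top_svt : svt (tableau_of_top R).
Proof.
apply/and5P; split.
- by apply/forallP => c; rewrite in_shape_cell implyFb.
- by apply/forallP => c; rewrite in_shape_cell card_tableau_of_top eqxx.
- by do 2 apply/forallP => ?; apply/implyP; apply: tableau_of_top_disjoint.
- apply/eqP/setP => x; rewrite inE; apply/bigcupP.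
  by have [c _ xc] := tableau_of_top_cover x; exists c.
- do 2 apply/forallP => ?; apply/implyP => /and3P [_ _ next].
  by do 2 (apply/forall_inP => ? ?); apply: tableau_of_top_increasing next _ _.
Qed.

Lemma row_labels_tableau_of_top : row_labels (tableau_of_top R) 0 = R.
Proof.
apply/setP => x; rewrite inE; apply/existsP/idP => [[c /andP [/eqP top]] | xR].
  by rewrite ffunE inE /row_of_top top => /andP [].
have [c e_row xc] := tableau_of_top_cover x; rewrite xR in e_row.
by exists c; rewrite e_row eqxx xc.
Qed.

End TopRow.

Lemma tableau_of_top_row_labels T : svt T -> tableau_of_top (row_labels T 0) = T.
Proof.
move=> svtT; apply/ffunP => c; apply/setP => x; rewrite ffunE inE.
have -> : row_of_top (row_labels T 0) c.1 = row_labels T c.1.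
  rewrite /row_of_top; case: c => [[[|[|]] ?] ?] //=.
  by rewrite row_labels1.
apply/andP/idP => [[x_row block] | xc]; last first.
  by rewrite (mem_row_labels svtT _ xc) eqxx (rank_row_labels_block svtT xc).
move: (x_row); rewrite inE => /existsP [c' /andP [/eqP e_row xc']].
have := rank_row_labels_block svtT xc'; rewrite e_row => block'.
by rewrite -(cell_val_inj e_row (row_prefix_block_inj block' block)).
Qed.

Lemma card_svt_two_rows : SVT_card lam rho = #|top_row_sets|.
Proof.
rewrite /SVT_card -(@card_in_imset _ _ (fun T => row_labels T 0)); last first.
  move=> T1 T2; rewrite !inE => svt1 svt2 e.
  by rewrite -(tableau_of_top_row_labels svt1) -(tableau_of_top_row_labels svt2) e.
apply: eq_card => R; apply/imsetP/idP => [[T] | R_top].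
  by rewrite inE => svtT ->; apply: row_labels0_ballot.
exists (tableau_of_top R); first by rewrite inE tableau_of_top_svt.
by rewrite row_labels_tableau_of_top.
Qed.

End TwoRowTableaux.

(** * The density of the theorem *)

Section TennisDensity.
Variables (n : nat) (s t : seq nat).
Hypothesis size_s : size s = n.
Hypothesis st_bounds : forall i, i < n -> 0 < nth 0 t i /\ nth 0 t i < nth 0 s i.
Local Notation rho := (tennis_rho s t n).

Lemma tennis_rho_gt0 i j : i < 2 -> j < n.+1 -> 0 < rho i j.
Proof.
rewrite /tennis_rho; case: i => [|[|]] // _ lt_jn /=.
  by case: j lt_jn => [|j] //= lt_jn; have [] := st_bounds lt_jn.
case: eqP => // /eqP ne_jn; have lt_jn' : j < n by rewrite ltn_neqAle ne_jn.
by have [_] := st_bounds lt_jn'; rewrite subn_gt0.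
Qed.

Lemma tennis_row_prefix0 j : row_prefix rho 0 j.+1 = (sumn (take j t)).+1.
Proof. by rewrite /row_prefix big_nat_recl // sumn_take_big add1n. Qed.

Lemma tennis_row_prefix1 j : j <= n -> row_prefix rho 1 j + sumn (take j t) = sumn (take j s).
Proof.
elim: j => [_ | j IH lt_jn]; first by rewrite /row_prefix big_geq ?take0.
have rho1j : rho 1 j = nth 0 s j - nth 0 t j by rewrite /tennis_rho /= ltn_eqF.
have [_ /ltnW le_ts] := st_bounds lt_jn.
by rewrite row_prefixS !sumn_takeS -(IH (ltnW lt_jn)) rho1j addnACA subnK.
Qed.

Lemma tennis_svt_N : svt_N [:: n.+1; n.+1] rho = (sumn s).+2.
Proof.
have rho1n : rho 1 n = 1 by rewrite /tennis_rho /= eqxx.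
have take_s : take n s = s by rewrite -size_s take_size.
have := tennis_row_prefix1 (leqnn n); rewrite take_s => pre1.
by rewrite svt_N_two_rows tennis_row_prefix0 row_prefixS rho1n -pre1; lia.
Qed.

Lemma tennis_top_row_sets :
  top_row_sets n.+1 rho =
  ballot_sets _ n.+1 (fun j => (sumn (take j t)).+1) (fun j => (sumn (take j s)).+1)
              (sumn (take n t)).+1.
Proof.
rewrite /top_row_sets [row_prefix _ 0 n.+1]tennis_row_prefix0.
apply: eq_ballot_sets => j lt_jn; rewrite tennis_row_prefix0 //.
by rewrite addSn addnC tennis_row_prefix1.
Qed.

End TennisDensity.

Theorem theorem5 (n : nat) (s t : seq nat) :
  1 <= n -> size s = n -> size t = n ->
  (forall i, i < n -> 0 < nth 0 t i /\ nth 0 t i < nth 0 s i) ->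
  tennis_B s t n = SVT_card [:: n.+1; n.+1] (tennis_rho s t n).
Proof.
move=> _ size_s _ st_bounds.
rewrite /tennis_B lawns_ballot_sets // (card_svt_two_rows (tennis_rho_gt0 st_bounds)).
rewrite (tennis_top_row_sets st_bounds).
(* The label type depends on the total density, so it is generalized before rewriting. *)
move: (svt_N _ _) (tennis_svt_N size_s st_bounds) => N ->.
apply: (@card_ballot_sets_shift _ _ _ _ _ 0 n) => //=; first by rewrite take0.
by rewrite -size_s take_size.
Qed.
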